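(* Let $Z\in\mathfrak X_S$ be as in the setup with $A=-2C$. Let $\gamma$ be a symmetric crossing periodic orbit whose crossing points with $\Sigma$ are $p_0=(x_0,y_0,0)$ and $p_1=(-y_0,-x_0,0)$, with $x_0y_0\neq 0$. Then its saltation-corrected monodromy matrix $M$ satisfies $$\det(M)=\Big(\frac{y_0}{x_0}\Big)^2.$$
   Context: Setup. Fix real parameters $A\neq 0$, $C$, $H$, $\Lambda$. Let $\Sigma=\{z=0\}$. Define $$X(x,y,z)=\big(Ax-H(((A-C)^2+1)z-\Lambda),\ \Lambda-(1+C^2)z,\ y+2Cz\big),$$ $$Y(x,y,z)=\big(-\Lambda-(1+C^2)z,\ Ay-H(((A-C)^2+1)z+\Lambda),\ x+2Cz\big).$$ $Z$ equals $X$ on $\{z\ge0\}$ and $Y$ on $\{z<0\}$ (family $\mathfrak X_S$, equivariant under $S(x,y,z)=(-y,-x,-z)$). On $\Sigma$, $X_3=y$ and $Y_3=x$. The periodic orbit runs from $p_0$ to $p_1$ along $X$ in time $t_X$, and from $p_1$ back to $p_0$ along $Y$ in time $t_Y$. Its saltation-corrected monodromy matrix is $$M=S_{Y\to X}(p_0)\,e^{DY t_Y}\,S_{X\to Y}(p_1)\,e^{DX t_X},$$ where $e_3=(0,0,1)^T$ and $$S_{X\to Y}(p)=I+\frac{(Y(p)-X(p))e_3^T}{X_3(p)},\qquad S_{Y\to X}(p)=I-\frac{(Y(p)-X(p))e_3^T}{Y_3(p)}.$$ *)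

From HB Require Import structures.
From mathcomp Require Import all_boot all_order all_algebra.
From mathcomp Require Import all_classical all_reals all_analysis.
Set Implicit Arguments. Unset Strict Implicit. Unset Printing Implicit Defensive.
Import Order.TTheory GRing.Theory Num.Theory.
Import numFieldNormedType.Exports.
Local Open Scope ring_scope.
Local Open Scope classical_set_scope.

Definition i0 : 'I_3 := @Ordinal 3 0 isT.
Definition i1 : 'I_3 := @Ordinal 3 1 isT.
Definition i2 : 'I_3 := @Ordinal 3 2 isT.

Definition pt {R : ringType} (a b c : R) : 'cV[R]_3 := \col_i [:: a; b; c]`_i.

Definition cx {R : ringType} (p : 'cV[R]_3) : R := p i0 0.
Definition cy {R : ringType} (p : 'cV[R]_3) : R := p i1 0.
Definition cz {R : ringType} (p : 'cV[R]_3) : R := p i2 0.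

Definition e3 {R : ringType} : 'cV[R]_3 := delta_mx i2 0.

Definition XF {R : ringType} (A C H L : R) (p : 'cV[R]_3) : 'cV[R]_3 :=
  pt (A * cx p - H * (((A - C) ^+ 2 + 1) * cz p - L))
     (L - (1 + C ^+ 2) * cz p)
     (cy p + 2 * C * cz p).

Definition YF {R : ringType} (A C H L : R) (p : 'cV[R]_3) : 'cV[R]_3 :=
  pt (- L - (1 + C ^+ 2) * cz p)
     (A * cy p - H * (((A - C) ^+ 2 + 1) * cz p + L))
     (cx p + 2 * C * cz p).

Definition ZF {R : realType} (A C H L : R) (p : 'cV[R]_3) : 'cV[R]_3 :=
  if 0 <= cz p then XF A C H L p else YF A C H L p.

Definition Sinv {R : ringType} (p : 'cV[R]_3) : 'cV[R]_3 :=
  pt (- cy p) (- cx p) (- cz p).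

Definition jac {R : realType} (F : 'cV[R]_3 -> 'cV[R]_3) (p : 'cV[R]_3) : 'M[R]_3 :=
  \matrix_(i < 3, j < 3) ('D_(delta_mx j 0) F p) i 0.

Definition mexp {R : realType} (M : 'M[R]_3) : 'M[R]_3 :=
  lim ((fun n : nat => \sum_(k < n) (k`!%:R)^-1 *: M ^+ k) @ \oo).

Definition salt_XY {R : realType} (X Y : 'cV[R]_3 -> 'cV[R]_3) (p : 'cV[R]_3) : 'M[R]_3 :=
  1%:M + (cz (X p))^-1 *: ((Y p - X p) *m e3^T).
Definition salt_YX {R : realType} (X Y : 'cV[R]_3 -> 'cV[R]_3) (p : 'cV[R]_3) : 'M[R]_3 :=
  1%:M - (cz (Y p))^-1 *: ((Y p - X p) *m e3^T).

(* DX is evaluated at p0 (start of the X-arc), DY at p1 (start of the Y-arc);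
   both fields are affine so their Jacobians are constant anyway. *)
Definition monodromy {R : realType} (X Y : 'cV[R]_3 -> 'cV[R]_3)
  (p0 p1 : 'cV[R]_3) (tX tY : R) : 'M[R]_3 :=
  salt_YX X Y p0 *m mexp (tY *: jac Y p1) *m salt_XY X Y p1 *m mexp (tX *: jac X p0).

Definition solves {R : realType} (F : 'cV[R]_3 -> 'cV[R]_3) (phi : R -> 'cV[R]_3)
  (a b : R) : Prop :=
  forall t : R, a <= t <= b -> is_derive t 1 phi (F (phi t)).

(* Both vector fields are affine, and the trace of their linear part is A + 2C,
   which vanishes when A = -2C.  By Liouville's formula (det e^{sM})' = tr M det e^{sM},
   the two flow factors of the monodromy matrix then have determinant 1.  Each saltation
   matrix is a rank-one perturbation I + u e3^T, whose determinant 1 + u_3 is a ratio of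
   the z-components of X and Y at the crossing point: X_3/Y_3 = y0/x0 at p0 and
   Y_3/X_3 = (-y0)/(-x0) at p1. *)

From HB Require Import structures.
From mathcomp Require Import all_boot all_order all_algebra ring.
From mathcomp Require Import all_classical all_reals all_analysis.
Import Order.TTheory GRing.Theory Num.Theory.
Import numFieldNormedType.Exports.
Set Implicit Arguments. Unset Strict Implicit. Unset Printing Implicit Defensive.
Local Open Scope ring_scope.
Local Open Scope classical_set_scope.

Lemma det_mx33 (R : comPzRingType) (A : 'M[R]_3) :
  \det A = A i0 i0 * (A i1 i1 * A i2 i2 - A i1 i2 * A i2 i1)
         - A i0 i1 * (A i1 i0 * A i2 i2 - A i1 i2 * A i2 i0)
         + A i0 i2 * (A i1 i0 * A i2 i1 - A i1 i1 * A i2 i0).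
Proof.
rewrite (expand_det_row _ ord0) !big_ord_recl big_ord0 /cofactor.
rewrite !(expand_det_row _ ord0) !big_ord_recl !big_ord0 /cofactor.
rewrite !det_mx11 !mxE /=.
(* Reindexing by [nat] turns the different spellings of an ordinal ([i1],
   [lift ord0 ord0], ...) into one [ring] atom. *)
pose a (i j : nat) := A (inord i) (inord j).
have Aa (x y : 'I_3) : A x y = a x y by rewrite /a !inord_val.
by rewrite !Aa /= /bump /=; ring.
Qed.

Lemma det_add1_mul_e3tr (R : comNzRingType) (u : 'cV[R]_3) :
  \det (1%:M + u *m e3^T) = 1 + cz u.
Proof. by rewrite det_mx33 /e3 /cz !mxE !big_ord1 !mxE /=; ring. Qed.

Section Saltation.
Variables (R : realType) (X Y : 'cV[R]_3 -> 'cV[R]_3) (p : 'cV[R]_3).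

Lemma det_salt_XY : cz (X p) != 0 -> \det (salt_XY X Y p) = cz (Y p) / cz (X p).
Proof.
move=> Xp_neq0; rewrite /salt_XY scalemxAl det_add1_mul_e3tr /cz !mxE.
by field.
Qed.

Lemma det_salt_YX : cz (Y p) != 0 -> \det (salt_YX X Y p) = cz (X p) / cz (Y p).
Proof.
move=> Yp_neq0; rewrite /salt_YX -scaleNr scalemxAl det_add1_mul_e3tr /cz !mxE.
by field.
Qed.

End Saltation.

Lemma cvg_mx_entrywise (R : realType) m n (u : nat -> 'M[R]_(m, n)) (l : 'M[R]_(m, n)) :
  (forall i j, (fun k => u k i j) @ \oo --> l i j) -> u @ \oo --> l.
Proof.
move=> ul; apply/cvg_mx_entourageP => E entE.
apply: filter_forall => i; apply: filter_forall => j.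
have /cvg_entourageP/(_ E entE) uijE := ul i j.
by near=> k; rewrite inE; near: k.
Unshelve. all: by end_near.
Qed.

Lemma is_cvg_pseries_fact (R : realType) (a : nat -> R) (B m x : R) :
  0 <= B -> 0 <= m -> (forall k, `|a k| <= B * m ^+ k) ->
  cvgn (pseries (fun k => a k / k`!%:R) x).
Proof.
move=> B0 m0 aB; apply: normed_cvg.
have Bexp := @is_cvg_seriesZ R _ B (is_cvg_series_exp_coeff (m * `|x|)).
apply: (series_le_cvg _ _ _ Bexp) => k /=.
- by [].
- by rewrite /exp_coeff /= mulr_ge0 // divr_ge0 // exprn_ge0 // mulr_ge0.
- rewrite /exp_coeff /= !normrM normfV normr_nat normrX.
  rewrite fctE -[X in _ <= X]/(B * _) exprMn !mulrA mulrAC.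
  by rewrite ler_wpM2r ?invr_ge0 // ler_wpM2r ?exprn_ge0.
Qed.

Lemma pseries_diffs_fact (R : realType) (a : nat -> R) :
  pseries_diffs (fun k => a k / k`!%:R) = (fun k => a k.+1 / k`!%:R).
Proof.
apply/funext => k; rewrite /pseries_diffs factS natrM invfM.
by field; rewrite pnatr_eq0 -lt0n fact_gt0 /= addrC natr1 pnatr_eq0.
Qed.

Section MatrixPowerSeries.
Variables (R : realType) (n : nat) (M : 'M[R]_n.+1).

Definition mnorm1 : R := \sum_i \sum_j `|M i j|.

Lemma mnorm1_ge0 : 0 <= mnorm1.
Proof. by apply: sumr_ge0 => i _; apply: sumr_ge0. Qed.

Lemma row_norm1_le i : \sum_l `|M i l| <= mnorm1.
Proof.
rewrite /mnorm1 [X in _ <= X](bigD1 i) //= lerDl.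
by apply: sumr_ge0 => k _; apply: sumr_ge0.
Qed.

Lemma norm_exprM_le k i j : `|(M ^+ k) i j| <= mnorm1 ^+ k.
Proof.
elim: k i j => [|k IHk] i j.
  by rewrite expr0 !mxE; case: (i == j); rewrite ?normr1 ?normr0.
rewrite exprS -mulmxE mxE; apply: (le_trans (ler_norm_sum _ _ _)).
apply: (@le_trans _ _ (\sum_l `|M i l| * mnorm1 ^+ k)).
  by apply: ler_sum => l _; rewrite normrM ler_wpM2l.
by rewrite -mulr_suml exprS ler_wpM2r ?row_norm1_le // exprn_ge0 ?mnorm1_ge0.
Qed.

Definition exp_coef i j (k : nat) : R := (M ^+ k) i j / k`!%:R.

Lemma is_cvg_exp_coef i j x : cvgn (pseries (exp_coef i j) x).
Proof.
apply: (@is_cvg_pseries_fact _ _ 1 mnorm1) => // [|k]; first exact: mnorm1_ge0.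
by rewrite mul1r norm_exprM_le.
Qed.

Lemma exp_partial_sumE s k i j :
  (\sum_(l < k) (l`!%:R)^-1 *: (s *: M) ^+ l) i j = pseries (exp_coef i j) s k.
Proof.
rewrite /pseries /series /= big_mkord summxE; apply: eq_bigr => l _.
by rewrite exprZn scalerA mxE /exp_coef; ring.
Qed.

Lemma pseries_exp_coefS i j s :
  pseries (fun k => (M ^+ k.+1) i j / k`!%:R) s =
  (fun k => \sum_l M i l * pseries (exp_coef l j) s k).
Proof.
apply/funext => k; rewrite /pseries /series /= !big_mkord.
under eq_bigr do rewrite mulr_sumr.
rewrite exchange_big /= big_mkord; apply: eq_bigr => p _.
rewrite exprS -mulmxE mxE !mulr_suml; apply: eq_bigr => l _.
by rewrite /exp_coef; ring.
Qed.

End MatrixPowerSeries.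

Section MatrixExponential.
Variables (R : realType) (M : 'M[R]_3).

Lemma mexpZE (s : R) i j : mexp (s *: M) i j = limn (pseries (exp_coef M i j) s).
Proof.
pose E := \matrix_(i, j) limn (pseries (exp_coef M i j) s) : 'M[R]_3.
have partial_sum_cvg : (fun k => \sum_(l < k) (l`!%:R)^-1 *: (s *: M) ^+ l) @ \oo --> E.
  apply: cvg_mx_entrywise => i' j'; rewrite mxE.
  under eq_fun do rewrite exp_partial_sumE.
  exact: is_cvg_exp_coef.
by rewrite /mexp (cvg_lim _ partial_sum_cvg) ?mxE //; exact: norm_hausdorff.
Qed.

Lemma mexp0 : mexp (0 *: M) = 1.
Proof.
rewrite /mexp scale0r; apply: lim_near_cst; first exact: norm_hausdorff.
exists 1%N => // -[|k] //= _.
rewrite big_ord_recl expr0 fact0 invr1 scale1r big1 ?addr0 // => l _.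
by rewrite exprS mul0r scaler0.
Qed.

Lemma is_derive_mexpZ (s : R) i j :
  is_derive s (1 : R) (fun s : R => mexp (s *: M) i j) (\sum_l M i l * mexp (s *: M) l j).
Proof.
under eq_fun do rewrite mexpZE.
apply: is_derive_eq.
  apply: (@pseries_snd_diffs _ _ (`|s| + 1)).
  - exact: is_cvg_exp_coef.
  - rewrite /exp_coef pseries_diffs_fact.
    apply: (@is_cvg_pseries_fact _ _ (mnorm1 M) (mnorm1 M)); rewrite ?mnorm1_ge0 // => k.
    by rewrite -exprS norm_exprM_le.
  - rewrite /exp_coef !pseries_diffs_fact.
    apply: (@is_cvg_pseries_fact _ _ (mnorm1 M ^+ 2) (mnorm1 M));
      rewrite ?exprn_ge0 ?mnorm1_ge0 // => k.
    by rewrite -exprD add2n norm_exprM_le.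
  - by rewrite [X in _ < X]ger0_norm ?ltrDl // addr_ge0.
rewrite /exp_coef pseries_diffs_fact pseries_exp_coefS.
apply: cvg_lim; first exact: Rhausdorff.
apply: (@cvg_big R 'I_3 +%R 0 xpredT) => [|l _]; first exact: add_continuous.
by rewrite mexpZE; apply: cvgMl_tmp; exact: is_cvg_exp_coef.
Qed.

Lemma is_derive_det_mexpZ (s : R) :
  is_derive s (1 : R) (fun s : R => \det (mexp (s *: M))) (\tr M * \det (mexp (s *: M))).
Proof.
pose e i j s := mexp (s *: M) i j.
have De i j : is_derive s 1 (e i j) (\sum_l M i l * e l j s) by exact: is_derive_mexpZ.
have -> : (fun s => \det (mexp (s *: M))) =
   (e i0 i0 * (e i1 i1 * e i2 i2 - e i1 i2 * e i2 i1)
  - e i0 i1 * (e i1 i0 * e i2 i2 - e i1 i2 * e i2 i0)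
  + e i0 i2 * (e i1 i0 * e i2 i1 - e i1 i1 * e i2 i0))%R.
  by apply/funext => x; rewrite det_mx33.
apply: is_derive_eq.
rewrite !fctE det_mx33 /mxtrace !big_ord_recl !big_ord0.
pose a (i j : nat) := M (inord i) (inord j).
have Ma (x y : 'I_3) : M x y = a x y by rewrite /a !inord_val.
pose b (i j : nat) := mexp (s *: M) (inord i) (inord j).
have eb (x y : 'I_3) : mexp (s *: M) x y = b x y by rewrite /b !inord_val.
by rewrite /e !Ma !eb /= /bump /= !addn0 !add1n /GRing.scale /=; ring.
Qed.

Lemma det_mexp_traceless : \tr M = 0 -> \det (mexp M) = 1.
Proof.
move=> trM.
have Ddet (s : R) : is_derive s (1 : R) (fun s : R => \det (mexp (s *: M))) 0.
  by rewrite -(mul0r (\det (mexp (s *: M)))) -trM; exact: is_derive_det_mexpZ.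
by have := @is_derive_0_is_cst R _ 1 0 Ddet; rewrite /= scale1r mexp0 det1.
Qed.

End MatrixExponential.

Lemma det_monodromy_traceless (R : realType) (X Y : 'cV[R]_3 -> 'cV[R]_3) p0 p1 tX tY :
  \tr (jac X p0) = 0 -> \tr (jac Y p1) = 0 ->
  \det (monodromy X Y p0 p1 tX tY) = \det (salt_YX X Y p0) * \det (salt_XY X Y p1).
Proof.
move=> trX trY.
have flowX : \det (mexp (tX *: jac X p0)) = 1.
  by rewrite det_mexp_traceless // mxtraceZ trX mulr0.
have flowY : \det (mexp (tY *: jac Y p1)) = 1.
  by rewrite det_mexp_traceless // mxtraceZ trY mulr0.
(* The contextual patterns keep rewrite from trying to unify [mexp _] with the
   saltation factors, which unfolds both and is very slow. *)
by rewrite /monodromy !det_mulmx [X in _ * X]flowX [X in _ * X * _ * _]flowY !mulr1.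
Qed.

Lemma derive_affine (R : numFieldType) (V W : normedModType R) (f : V -> W) a v w :
  (forall h : R, f (h *: v + a) = f a + h *: w) -> 'D_v f a = w.
Proof.
move=> f_affine; rewrite /derive; apply: lim_near_cst; first exact: norm_hausdorff.
near=> h; rewrite /= /shift f_affine addrC addKr scalerA mulVf ?scale1r //.
by near: h; exact: nbhs_dnbhs_neq.
Unshelve. all: by end_near.
Qed.

Section AffineFields.
Variables (R : realType) (A C H L : R).

Definition XF_lin (v : 'cV[R]_3) : 'cV[R]_3 :=
  pt (A * cx v - H * (((A - C) ^+ 2 + 1) * cz v))
     (- (1 + C ^+ 2) * cz v)
     (cy v + 2 * C * cz v).

Definition YF_lin (v : 'cV[R]_3) : 'cV[R]_3 :=
  pt (- (1 + C ^+ 2) * cz v)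
     (A * cy v - H * (((A - C) ^+ 2 + 1) * cz v))
     (cx v + 2 * C * cz v).

Lemma XF_affine a v (h : R) : XF A C H L (h *: v + a) = XF A C H L a + h *: XF_lin v.
Proof.
apply/matrixP => i j; rewrite !mxE /cx /cy /cz !mxE.
by case: i => [[|[|[|]]] ?] //=; ring.
Qed.

Lemma YF_affine a v (h : R) : YF A C H L (h *: v + a) = YF A C H L a + h *: YF_lin v.
Proof.
apply/matrixP => i j; rewrite !mxE /cx /cy /cz !mxE.
by case: i => [[|[|[|]]] ?] //=; ring.
Qed.

Lemma derive_XF p v : 'D_v (XF A C H L) p = XF_lin v.
Proof. by apply: derive_affine => h; apply: XF_affine. Qed.

Lemma mxtrace_jac_XF p : \tr (jac (XF A C H L) p) = A + 2 * C.
Proof.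
rewrite /mxtrace /jac !big_ord_recl big_ord0 !mxE.
by rewrite !derive_XF /XF_lin /cx /cy /cz !mxE /= !mulr0 !mulr1 ?subr0 !add0r !addr0.
Qed.

Lemma derive_YF p v : 'D_v (YF A C H L) p = YF_lin v.
Proof. by apply: derive_affine => h; apply: YF_affine. Qed.

Lemma mxtrace_jac_YF p : \tr (jac (YF A C H L) p) = A + 2 * C.
Proof.
rewrite /mxtrace /jac !big_ord_recl big_ord0 !mxE.
by rewrite !derive_YF /YF_lin /cx /cy /cz !mxE /= !mulr0 !mulr1 ?subr0 !add0r !addr0.
Qed.

End AffineFields.

Theorem mainTheorem9 (R : realType) (A C H L x0 y0 tX tY : R)
  (phiX phiY : R -> 'cV[R]_3) :
  A != 0 -> A = - (2 * C) -> x0 * y0 != 0 ->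
  let X := XF A C H L in
  let Y := YF A C H L in
  let p0 := pt x0 y0 0 in
  let p1 := pt (- y0) (- x0) 0 in
  p1 = Sinv p0 ->
  0 < cz (X p0) * cz (Y p0) -> 0 < cz (X p1) * cz (Y p1) ->
  0 < tX -> phiX 0 = p0 -> phiX tX = p1 -> solves X phiX 0 tX ->
  (forall t, 0 < t < tX -> 0 < cz (phiX t)) ->
  0 < tY -> phiY 0 = p1 -> phiY tY = p0 -> solves Y phiY 0 tY ->
  (forall t, 0 < t < tY -> cz (phiY t) < 0) ->
  \det (monodromy X Y p0 p1 tX tY) = (y0 / x0) ^+ 2.
Proof.
move=> _ A_2C x0y0 X Y p0 p1 _ _ _ _ _ _ _ _ _ _ _ _ _.
have traceless : A + 2 * C = 0 by rewrite A_2C addNr.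
have [x0_neq0 y0_neq0] : x0 != 0 /\ y0 != 0 by apply/andP; rewrite -negb_or -mulf_eq0.
have [Xp0 Yp0] : cz (X p0) = y0 /\ cz (Y p0) = x0.
  by rewrite /X /Y /XF /YF /cz /cx /cy !mxE /= !mulr0 !addr0.
have [Xp1 Yp1] : cz (X p1) = - x0 /\ cz (Y p1) = - y0.
  by rewrite /X /Y /XF /YF /cz /cx /cy !mxE /= !mulr0 !addr0.
have trX : \tr (jac X p0) = 0 by rewrite /X mxtrace_jac_XF.
have trY : \tr (jac Y p1) = 0 by rewrite /Y mxtrace_jac_YF.
rewrite det_monodromy_traceless // det_salt_YX ?Yp0 // det_salt_XY ?Xp1 ?oppr_eq0 //.
by rewrite Xp0 Yp1 invrN mulrNN expr2.
Qed.
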